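(* Let $x,y\in\mathfrak h$. The numbers $\exp(\alpha_i(x+\sqrt{-1}y))$, $i=1,\dots,l$, are all real if and only if $y=\sum_{i=1}^lk_iy_i$ for some integers $k_i$. Moreover, for each $i$ and each odd integer $k_i$, the element $h_i=\exp(\sqrt{-1}k_iy_i)$ lies in $\tilde G$ and satisfies $h_i^2=e$ and $h_i\neq e$.
   Context: $\mathfrak g$ is a real split semisimple Lie algebra of rank $l$ with split Cartan subalgebra $\mathfrak h$ and simple roots $\alpha_1,\dots,\alpha_l$ (extended complex-linearly to $\mathfrak h_{\mathbb C}$). $G_{\mathbb C}$ is the connected adjoint group of $\mathfrak g\otimes\mathbb C$, with exponential map $\exp:\mathfrak g\otimes\mathbb C\to G_{\mathbb C}$, and $\tilde G=\{g\in G_{\mathbb C}:\mathrm{Ad}(g)\mathfrak g\subset\mathfrak g\}$. For $i=1,\dots,l$, $y_i=2\pi m^\circ_{\alpha_i}/(\alpha_i,\alpha_i)$, where $(\,,)$ is the Killing form and $m^\circ_{\alpha_i}\in\mathfrak h$ corresponds via the Killing form to the fundamental weight $m_{\alpha_i}$; equivalently $y_i\in\mathfrak h$ is determined by $\alpha_j(y_i)=\pi\delta_{ij}$ for all $j$. *)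

From mathcomp Require Import all_boot all_algebra.
From mathcomp Require Import all_classical all_reals all_analysis.
From mathcomp Require Import complex.
Import GRing.Theory Num.Theory.

Set Implicit Arguments.
Unset Strict Implicit.
Unset Printing Implicit Defensive.

Local Open Scope classical_set_scope.
Local Open Scope ring_scope.

Section LieDefs.
Variables (R : realType) (n : nat).
Implicit Types (br : 'rV[R]_n -> 'rV[R]_n -> 'rV[R]_n).

Definition lie_algebra br : Prop :=
  [/\ (forall (a : R) x y z, br (a *: x + y) z = a *: br x z + br y z),
      (forall (a : R) x y z, br x (a *: y + z) = a *: br x y + br x z),
      (forall x, br x x = 0) &
      (forall x y z, br x (br y z) + br y (br z x) + br z (br x y) = 0)].

(* ad x as a matrix acting on row vectors: v *m ad br x = br x v *)
Definition ad br (x : 'rV[R]_n) : 'M[R]_n := lin1_mx (br x).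

Definition killing br (x y : 'rV[R]_n) : R := \tr (ad br x *m ad br y).

Definition semisimple br : Prop :=
  lie_algebra br /\ forall x, (forall y, killing br x y = 0) -> x = 0.

(* h is given by a matrix Hb whose rows form a basis of h; an element of h
   is written c *m Hb with coordinates c : 'rV_l. *)
Definition split_cartan br (l : nat) (Hb : 'M[R]_(l, n)) : Prop :=
  [/\ row_free Hb,
      (forall c d : 'rV[R]_l, br (c *m Hb) (d *m Hb) = 0),
      (forall c : 'rV[R]_l, diagonalizable (ad br (c *m Hb))) &
      (forall x, (forall c : 'rV[R]_l, br x (c *m Hb) = 0) -> (x <= Hb)%MS)].

(* pairing of a linear functional a on h (given by its values on the basis
   of h) with the element of h of coordinates c *)
Definition hval (l : nat) (a c : 'rV[R]_l) : R := \sum_(i < l) a 0 i * c 0 i.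

Definition is_root br (l : nat) (Hb : 'M[R]_(l, n)) (a : 'rV[R]_l) : Prop :=
  a != 0 /\ exists v : 'rV[R]_n, v != 0 /\
    forall c : 'rV[R]_l, br (c *m Hb) v = hval a c *: v.

Definition simple_roots br (l : nat) (Hb : 'M[R]_(l, n))
    (al : 'I_l -> 'rV[R]_l) : Prop :=
  [/\ (forall i, is_root br Hb (al i)),
      row_free (\matrix_(i < l) al i) &
      (forall b, is_root br Hb b -> exists k : 'I_l -> int,
         b = \sum_(i < l) (k i)%:~R *: al i /\
         ((forall i, (0 <= k i)%R) \/ (forall i, (k i <= 0)%R)))].

(* complex-linear extension: alpha(x + sqrt(-1) y) *)
Definition alphaC (l : nat) (a cx cy : 'rV[R]_l) : R[i] :=
  (hval a cx +i* hval a cy)%C.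

Definition cexp (z : R[i]) : R[i] :=
  ((expR (complex.Re z))%:C * (cos (complex.Im z) +i* sin (complex.Im z)))%C.

(* g_C = g + sqrt(-1) g is modelled as 'rV_(n+n) (row_mx U V = U + iV).
   adC br X Y is (the realification of) ad(X + iY) on g_C. *)
Definition adC br (X Y : 'rV[R]_n) : 'M[R]_(n + n) :=
  lin1_mx (fun w : 'rV[R]_(n + n) =>
    row_mx (br X (lsubmx w) - br Y (rsubmx w))
           (br X (rsubmx w) + br Y (lsubmx w))).

Definition mexp (m : nat) (M : 'M[R]_m) : 'M[R]_m :=
  lim (series (fun k => (k`!%:R)^-1 *: M ^+ k) @ \oo).

(* G_C: the group generated by exp(ad Z), Z in g_C (acting on g_C) *)
Inductive inGC br : 'M[R]_(n + n) -> Prop :=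
  | GC1 : inGC br 1%:M
  | GCexp (X Y : 'rV[R]_n) (g : 'M[R]_(n + n)) :
      inGC br g -> inGC br (mexp (adC br X Y) *m g).

(* tilde G = { g in G_C : Ad(g) g \subset g } *)
Definition in_Gtilde br (g : 'M[R]_(n + n)) : Prop :=
  inGC br g /\
  forall U : 'rV[R]_n, exists U' : 'rV[R]_n, row_mx U 0 *m g = row_mx U' 0.

End LieDefs.

(* Since exp(alpha_i(x + sqrt(-1) y)) = e^(alpha_i(x)) (cos alpha_i(y) +
   sqrt(-1) sin alpha_i(y)), it is real iff alpha_i(y) is in pi Z; as the
   simple roots form a basis of h^* with alpha_j(y_i) = pi delta_ij, this says
   exactly that y is in sum_i Z y_i.

   The operators ad z, z in h, are simultaneously diagonalisable on g and
   every weight is 0 or a root, hence an integral combination of simple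
   roots, so k y_i acts on each weight vector v by m pi with m integral.  On
   the plane spanned by v and sqrt(-1) v in g_C, ad(sqrt(-1) k y_i) generates
   a rotation by the angle m pi, whose exponential is (-1)^m.  Hence
   exp(ad(sqrt(-1) k y_i)) is diagonal with entries +-1 in a basis of g
   (doubled to g_C): it preserves g, squares to the identity, and acts by
   (-1)^k = -1 on a root vector of alpha_i. *)

From HB Require Import structures.
From mathcomp Require Import all_boot all_algebra.
From mathcomp Require Import all_classical all_reals all_analysis.
From mathcomp Require Import complex.
From mathcomp Require Import lra ring.
Import GRing.Theory Num.Theory numFieldNormedType.Exports.

Set Implicit Arguments.
Unset Strict Implicit.
Unset Printing Implicit Defensive.

Local Open Scope classical_set_scope.
Local Open Scope ring_scope.

Lemma alternatingz (U : zmodType) (V : pzRingType) (f : U -> V) (T : U) :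
  alternating f T -> forall (m : int) a, f (a + T *~ m) = (-1) ^+ `|m|%N * f a.
Proof.
move=> fT [] k a; first exact: alternatingn.
rewrite NegzE mulrNz /=.
have := alternatingn fT k.+1 (a - T *+ k.+1); rewrite subrK => ->.
by rewrite mulrA -exprD -signr_odd oddD addbb mul1r.
Qed.

Section TrigIntPi.
Variable R : realType.

Lemma sin_pi_int (m : int) : sin (m%:~R * pi) = 0 :> R.
Proof. by rewrite mulrzl -[_ *~ m]add0r (alternatingz (@sinDpi R)) sin0 mulr0. Qed.

Lemma cos_pi_int (m : int) : cos (m%:~R * pi) = (-1) ^+ `|m|%N :> R.
Proof. by rewrite mulrzl -[_ *~ m]add0r (alternatingz (@cosDpi R)) cos0 mulr1. Qed.

Lemma sin_eq0P (x : R) : sin x = 0 <-> exists m : int, x = m%:~R * pi.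
Proof.
split=> [sx0|[m ->]]; last exact: sin_pi_int.
have pi_gt0 := @pi_gt0 R.
set m := Num.floor (x / pi); set r := x - m%:~R * pi.
have r_ge0 : 0 <= r.
  by have := floor_le (x / pi); rewrite ler_pdivlMr // /r; lra.
have r_ltpi : r < pi.
  have := floorD1_gt (x / pi).
  by rewrite ltr_pdivrMr // intrD mulrDl mul1r /r; lra.
have [r0|r_neq0] := eqVneq r 0.
  by exists m; apply/eqP; rewrite -subr_eq0 -/r r0.
have := @sin_gt0_pi R r; rewrite lt0r r_neq0 r_ge0 r_ltpi => /(_ isT).
by rewrite /r mulrzl -mulrNz (alternatingz (@sinDpi R)) sx0 mulr0 lt0r eqxx.
Qed.

Lemma cexp_realP (x y : R) :
  (exists r : R, cexp (x +i* y)%C = (r%:C)%C) <-> sin y = 0.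
Proof.
split=> [[r /(congr1 (@complex.Im _)) /=] | sy0].
  rewrite mul0r addr0 => /eqP; rewrite mulf_eq0 (negPf (lt0r_neq0 (expR_gt0 x))).
  by move/eqP.
exists (expR x * cos y); apply/eqP; rewrite eq_complex /= sy0.
by rewrite !mul0r !mulr0 subr0 !addr0 !eqxx.
Qed.

End TrigIntPi.

Section MatrixConvergence.
Variable R : realType.

Lemma cvg_mxP m p (F : nat -> 'M[R]_(m, p)) (A : 'M[R]_(m, p)) :
  F @ \oo --> A <-> forall i j, F N i j @[N --> \oo] --> A i j.
Proof.
split=> [/cvg_mx_entourageP FA i j | FA].
  apply/cvg_entourageP => E entE.
  apply: (@filterS _ _ _ (fun N => forall i j, (A i j, F N i j) \in E)).
    by move=> N /(_ i j); rewrite inE.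
  exact: FA.
apply/cvg_mx_entourageP => E entE.
have FAE (ij : 'I_m * 'I_p) :
    \forall N \near \oo, (A ij.1 ij.2, F N ij.1 ij.2) \in E.
  case: ij => i j; have /cvg_app_entourageP/(_ E entE) := FA i j.
  by apply: filterS => N; rewrite inE.
by apply: filterS (filter_forall _ FAE) => N FAN i j; exact: (FAN (i, j)).
Qed.

Lemma cvg_mulmxl m p q (B : 'M[R]_(q, m)) (F : nat -> 'M[R]_(m, p)) A :
  F @ \oo --> A -> (fun N => B *m F N) @ \oo --> B *m A.
Proof.
move=> /cvg_mxP FA; apply/cvg_mxP => i j; rewrite mxE.
under eq_cvg do rewrite mxE.
apply: cvg_big => //; first exact: add_continuous.
by move=> k _; apply: cvgM => //; exact: cvg_cst.
Qed.

Lemma cvg_mx_rows m p (F : nat -> 'M[R]_(m, p)) (A : 'M[R]_(m, p)) :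
  (forall i, (fun N => row i (F N)) @ \oo --> row i A) -> F @ \oo --> A.
Proof.
move=> FA; apply/cvg_mxP => i j.
have /cvg_mxP/(_ 0 j) := FA i; rewrite mxE.
by under eq_cvg do rewrite mxE.
Qed.

Lemma cvg_eigenbasis m (S : nat -> 'M[R]_m) (Q : 'M[R]_m) (d : 'rV[R]_m) :
  Q \in unitmx ->
  (forall i, (fun N => row i Q *m S N) @ \oo --> d 0 i *: row i Q) ->
  S @ \oo --> invmx Q *m diag_mx d *m Q.
Proof.
move=> Q_unit rowsQ_cvg.
have QS_cvg : (fun N => Q *m S N) @ \oo --> diag_mx d *m Q.
  apply: cvg_mx_rows => i; rewrite row_mul row_diag_mx -scalemxAl -rowE.
  by under eq_cvg do rewrite row_mul; exact: rowsQ_cvg.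
have := cvg_mulmxl (B := invmx Q) QS_cvg; rewrite mulmxA.
by under eq_cvg do rewrite mulmxA mulVmx // mul1mx.
Qed.

End MatrixConvergence.

Section TaylorTerms.
Variable R : comRingType.

Definition cos_term (x : R) k := (~~ odd k)%:R * (-1) ^+ k./2 * x ^+ k.
Definition sin_term (x : R) k := (odd k)%:R * (-1) ^+ k.-1./2 * x ^+ k.

Lemma cos_termS x k : cos_term x k.+1 = - (x * sin_term x k).
Proof.
rewrite /cos_term /sin_term -(odd_double_half k).
case: (odd k); rewrite ?add1n ?add0n.
  by rewrite -doubleS !oddS !odd_double succnK !doubleK !exprS; ring.
by rewrite oddS odd_double !mul0r; ring.
Qed.

Lemma sin_termS x k : sin_term x k.+1 = x * cos_term x k.
Proof.
rewrite /cos_term /sin_term -(odd_double_half k).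
case: (odd k); rewrite ?add1n ?add0n.
  by rewrite -doubleS !oddS !odd_double !mul0r; ring.
by rewrite oddS odd_double succnK !doubleK !exprS; ring.
Qed.

End TaylorTerms.

Section RotationPlane.
Variable R : realType.

Lemma cos_coeff_term (x : R) k : cos_coeff x k = (k`!%:R)^-1 * cos_term x k.
Proof. by rewrite /cos_coeff /cos_term /= -exprnP mulrC. Qed.

Lemma sin_coeff_term (x : R) k : sin_coeff x k = (k`!%:R)^-1 * sin_term x k.
Proof. by rewrite /sin_coeff /sin_term /= mulrC. Qed.

Definition exp_series m (M : 'M[R]_m) :=
  series (fun k => (k`!%:R)^-1 *: M ^+ k).

Lemma mexp_cvg m (M : 'M[R]_m) A : exp_series M @ \oo --> A -> mexp M = A.
Proof. exact: cvg_lim. Qed.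

Variables (m : nat) (M : 'M[R]_m) (u w : 'rV[R]_m) (x : R).
Hypotheses (uM : u *m M = x *: w) (wM : w *m M = - x *: u).

Lemma rotation_expr k : u *m M ^+ k = cos_term x k *: u + sin_term x k *: w.
Proof.
elim: k => [|k IHk].
  rewrite expr0 mulmx1 /cos_term /sin_term /= !expr0 !mulr1.
  by rewrite scale1r scale0r addr0.
rewrite exprSr -mulmxE mulmxA IHk mulmxDl -!scalemxAl uM wM cos_termS sin_termS.
by rewrite !scalerA addrC; congr (_ *: _ + _ *: _); ring.
Qed.

Lemma rotation_exp_series N :
  u *m exp_series M N = series (cos_coeff x) N *: u + series (sin_coeff x) N *: w.
Proof.
rewrite /exp_series /series /= mulmx_sumr !scaler_suml -big_split /=.
apply: eq_bigr => k _; rewrite -scalemxAr rotation_expr scalerDr !scalerA.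
by rewrite cos_coeff_term sin_coeff_term.
Qed.

Lemma cvg_rotation_exp_series :
  (fun N => u *m exp_series M N) @ \oo --> cos x *: u + sin x *: w.
Proof.
under eq_cvg do rewrite rotation_exp_series.
apply: cvgD; apply: cvgZ; try exact: cvg_cst.
  by rewrite cos.unlock; exact: is_cvg_series_cos_coeff.
by rewrite sin.unlock; exact: is_cvg_series_sin_coeff.
Qed.

Lemma cvg_rotation_exp_series_pi_int (k : int) : x = k%:~R * pi ->
  (fun N => u *m exp_series M N) @ \oo --> ((-1) ^+ `|k|%N : R) *: u.
Proof.
move=> xE; have := cvg_rotation_exp_series.
by rewrite xE sin_pi_int cos_pi_int scale0r addr0.
Qed.

End RotationPlane.

Lemma mul_rV_lin1_linear (R : pzRingType) m p (f : 'rV[R]_m -> 'rV[R]_p) :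
  linear f -> forall u, u *m lin1_mx f = f u.
Proof.
move=> lin_f u.
exact: (mul_rV_lin1 (HB.pack f (GRing.isLinear.Build _ _ _ _ f lin_f)) u).
Qed.

Section LieAlgebra.
Variables (R : realType) (n : nat) (br : 'rV[R]_n -> 'rV[R]_n -> 'rV[R]_n).
Hypothesis br_lie : lie_algebra br.

Lemma br_linear_l z : linear (br ^~ z). Proof. by move=> a x y; case: br_lie. Qed.
Lemma br_linear_r x : linear (br x). Proof. by move=> a y z; case: br_lie. Qed.

Lemma br0l z : br 0 z = 0.
Proof.
by have := br_linear_l z (-1) 0 0; rewrite scaler0 addr0 scaleN1r addNr.
Qed.
Lemma br0r x : br x 0 = 0.
Proof.
by have := br_linear_r x (-1) 0 0; rewrite scaler0 addr0 scaleN1r addNr.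
Qed.
Lemma brZl a x z : br (a *: x) z = a *: br x z.
Proof. by have := br_linear_l z a x 0; rewrite !addr0 br0l addr0. Qed.
Lemma brZr a x y : br x (a *: y) = a *: br x y.
Proof. by have := br_linear_r x a y 0; rewrite !addr0 br0r addr0. Qed.
Lemma brDl x y z : br (x + y) z = br x z + br y z.
Proof. by have := br_linear_l z 1 x y; rewrite !scale1r. Qed.
Lemma brDr x y z : br x (y + z) = br x y + br x z.
Proof. by have := br_linear_r x 1 y z; rewrite !scale1r. Qed.
Lemma brNr x y : br x (- y) = - br x y.
Proof. by rewrite -scaleN1r brZr scaleN1r. Qed.

Lemma br_suml I (r : seq I) (P : pred I) (F : I -> 'rV[R]_n) z :
  br (\sum_(i <- r | P i) F i) z = \sum_(i <- r | P i) br (F i) z.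
Proof. by elim/big_rec2: _ => [|i y1 y2 _ <-]; rewrite ?br0l ?brDl. Qed.

Lemma br_anti x y : br x y = - br y x.
Proof.
have [_ _ br_alt _] := br_lie.
have := br_alt (x + y); rewrite brDl !brDr !br_alt add0r addr0 => /eqP.
by rewrite addr_eq0 => /eqP.
Qed.

Lemma ad_mul x v : v *m ad br x = br x v.
Proof. exact/mul_rV_lin1_linear/br_linear_r. Qed.

Lemma ad_comm x y :
  br x y = 0 -> ad br x *m ad br y = ad br y *m ad br x.
Proof.
move=> xy0; apply/row_matrixP => i; rewrite !rowE !mulmxA !ad_mul.
have [_ _ _ jacobi] := br_lie.
move: (jacobi x y (delta_mx 0 i)); rewrite xy0 br0r addr0.
by rewrite (br_anti _ x) brNr => /eqP; rewrite subr_eq0 => /eqP.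
Qed.

Lemma adC_mul X Y w : w *m adC br X Y =
  row_mx (br X (lsubmx w) - br Y (rsubmx w)) (br X (rsubmx w) + br Y (lsubmx w)).
Proof.
apply: mul_rV_lin1_linear => a u v.
rewrite !linearP /= !br_linear_r scale_row_mx add_row_mx.
by congr row_mx; [rewrite scalerBr opprD addrACA | rewrite scalerDr addrACA].
Qed.

Lemma adC_eigen_rotation Y v x : br Y v = x *: v ->
  row_mx v 0 *m adC br 0 Y = x *: row_mx 0 v /\
  row_mx 0 v *m adC br 0 Y = - x *: row_mx v 0.
Proof.
move=> Yv; rewrite !adC_mul !row_mxKl !row_mxKr !br0l !br0r Yv.
by rewrite !scale_row_mx !scaler0 !(sub0r, add0r, oppr0, scaleNr).
Qed.

Lemma cvg_exp_adC_weight Y v (m : int) : br Y v = (m%:~R * pi) *: v ->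
  (fun N => row_mx v 0 *m exp_series (adC br 0 Y) N) @ \oo -->
    ((-1) ^+ `|m|%N : R) *: row_mx v 0 /\
  (fun N => row_mx 0 v *m exp_series (adC br 0 Y) N) @ \oo -->
    ((-1) ^+ `|m|%N : R) *: row_mx 0 v.
Proof.
move=> Yv; have [vM v'M] := adC_eigen_rotation Yv.
split; first exact: (cvg_rotation_exp_series_pi_int (k := m) vM v'M erefl).
(* (row_mx 0 v, - row_mx v 0) is again a rotation pair with the same angle. *)
have wM : row_mx 0 v *m adC br 0 Y = (m%:~R * pi) *: - row_mx v 0.
  by rewrite v'M scaleNr scalerN.
have uM : - row_mx v 0 *m adC br 0 Y = - (m%:~R * pi) *: row_mx 0 v.
  by rewrite mulNmx vM scaleNr.
exact: (cvg_rotation_exp_series_pi_int (k := m) wM uM erefl).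
Qed.

End LieAlgebra.

Section Pairing.
Variables (R : realType) (l : nat).
Implicit Types (a c : 'rV[R]_l).

Lemma hvalE a c : hval a c = (a *m c^T) 0 0.
Proof. by rewrite /hval mxE; apply: eq_bigr => i _; rewrite mxE. Qed.

Lemma hval0l c : hval 0 c = 0.
Proof. by rewrite hvalE mul0mx mxE. Qed.

Lemma hvalZl k a c : hval (k *: a) c = k * hval a c.
Proof. by rewrite !hvalE -scalemxAl mxE. Qed.

Lemma hvalZr k a c : hval a (k *: c) = k * hval a c.
Proof. by rewrite !hvalE linearZ /= -scalemxAr mxE. Qed.

Lemma hval_suml I (r : seq I) (P : pred I) (F : I -> 'rV[R]_l) c :
  hval (\sum_(i <- r | P i) F i) c = \sum_(i <- r | P i) hval (F i) c.
Proof.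
rewrite hvalE mulmx_suml summxE.
by apply: eq_bigr => i _; rewrite hvalE.
Qed.

Lemma hval_sumr I (r : seq I) (P : pred I) (F : I -> 'rV[R]_l) a :
  hval a (\sum_(i <- r | P i) F i) = \sum_(i <- r | P i) hval a (F i).
Proof.
rewrite hvalE linear_sum mulmx_sumr summxE.
by apply: eq_bigr => i _; rewrite hvalE.
Qed.

Lemma hval_basis_inj (al : 'I_l -> 'rV[R]_l) c d :
  row_free (\matrix_i al i) ->
  (forall j, hval (al j) c = hval (al j) d) -> c = d.
Proof.
move=> free_al al_cd; apply: trmx_inj.
have al_unit : \matrix_i al i \in unitmx by rewrite -row_free_unit.
have mxE_hval c' j : (\matrix_i al i *m c'^T) j 0 = hval (al j) c'.
  by rewrite hvalE !mxE; apply: eq_bigr => k _; rewrite !mxE.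
apply: (can_inj (mulKmx al_unit)); apply/matrixP => j z.
by rewrite (ord1 z) !mxE_hval.
Qed.

End Pairing.

Section CartanWeights.
Variables (R : realType) (n l : nat) (br : 'rV[R]_n -> 'rV[R]_n -> 'rV[R]_n).
Variable Hb : 'M[R]_(l, n).
Hypotheses (br_lie : lie_algebra br) (cartan : split_cartan br Hb).

Lemma cartan_weight_basis : exists2 P : 'M[R]_n, P \in unitmx &
  exists a : 'I_n -> 'rV[R]_l,
    forall r c, br (c *m Hb) (row r P) = hval (a r) c *: row r P.
Proof.
have [_ h_abelian h_diag _] := cartan.
pose ads := [seq ad br (delta_mx 0 j *m Hb) | j <- enum 'I_l].
have [P P_unit /allP P_diag] : codiagonalizable ads.
  apply/codiagonalizableP; split.
    move=> A B /mapP[j _ ->] /mapP[j' _ ->].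
    exact/ad_comm/h_abelian.
  by move=> A /mapP[j _ ->]; apply: h_diag.
exists P => //.
have /choice[d Pd] : forall j : 'I_l, exists d : 'rV[R]_n,
    P *m ad br (delta_mx 0 j *m Hb) = diag_mx d *m P.
  move=> j; have /P_diag /diagonalizable_forPex[d Pd] :
      ad br (delta_mx 0 j *m Hb) \in ads by apply: map_f; rewrite mem_enum.
  by exists d; apply/(simmxP P_unit).
exists (fun r => \row_j d j 0 r) => r c.
have basis_eigen j : br (delta_mx 0 j *m Hb) (row r P) = d j 0 r *: row r P.
  by rewrite -(ad_mul br_lie) -row_mul Pd row_mul row_diag_mx -scalemxAl -rowE.
rewrite {1}(row_sum_delta c) mulmx_suml (br_suml br_lie).
under eq_bigr do rewrite -scalemxAl (brZl br_lie) basis_eigen scalerA.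
rewrite -scaler_suml /hval; congr (_ *: _); apply: eq_bigr => j _.
by rewrite mxE mulrC.
Qed.

End CartanWeights.

Section CorootDuality.
Variables (R : realType) (l : nat) (al yc : 'I_l -> 'rV[R]_l).
Hypothesis al_yc : forall i j, hval (al j) (yc i) = if i == j then pi else 0.

Lemma hval_sum_yc (k : 'I_l -> int) j :
  hval (al j) (\sum_i (k i)%:~R *: yc i) = (k j)%:~R * pi.
Proof.
rewrite hval_sumr (bigD1 j) //= hvalZr al_yc eqxx big1 ?addr0 // => i ij.
by rewrite hvalZr al_yc (negPf ij) mulr0.
Qed.

Lemma hval_sum_al (k : 'I_l -> int) i :
  hval (\sum_j (k j)%:~R *: al j) (yc i) = (k i)%:~R * pi.
Proof.
rewrite hval_suml (bigD1 i) //= hvalZl al_yc eqxx big1 ?addr0 // => j ji.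
by rewrite hvalZl al_yc eq_sym (negPf ji) mulr0.
Qed.

Lemma cexp_alphaC_realP : row_free (\matrix_i al i) -> forall cx cy : 'rV[R]_l,
  (forall i, exists r : R, cexp (alphaC (al i) cx cy) = (r%:C)%C) <->
  (exists k : 'I_l -> int, cy = \sum_i (k i)%:~R *: yc i).
Proof.
move=> free_al cx cy; split=> [al_real | [k ->] i]; last first.
  by apply/cexp_realP; rewrite hval_sum_yc sin_pi_int.
have /choice[k al_cy] : forall i, exists m : int, hval (al i) cy = m%:~R * pi.
  by move=> i; apply/sin_eq0P/(cexp_realP (hval (al i) cx)); exact: al_real.
by exists k; apply: (hval_basis_inj free_al) => j; rewrite hval_sum_yc.
Qed.

End CorootDuality.

Section ExpCoweight.
Variables (R : realType) (n l : nat) (br : 'rV[R]_n -> 'rV[R]_n -> 'rV[R]_n).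
Variables (Hb : 'M[R]_(l, n)) (al yc : 'I_l -> 'rV[R]_l).
Hypotheses (br_lie : lie_algebra br) (cartan : split_cartan br Hb).
Hypotheses (roots : simple_roots br Hb al)
  (al_yc : forall i j, hval (al j) (yc i) = if i == j then pi else 0).

Lemma weight_coweight_pi_int i (k : int) a v :
  (forall c, br (c *m Hb) v = hval a c *: v) -> v != 0 ->
  exists m : int, br (((k%:~R : R) *: yc i) *m Hb) v = (m%:~R * pi) *: v.
Proof.
move=> v_weight v_neq0; rewrite v_weight hvalZr.
have [->|a_neq0] := eqVneq a 0; first by exists 0; rewrite hval0l mulr0 mul0r.
have [_ _ /(_ a) [|ka [-> _]]] := roots; first by split=> //; exists v.
by exists (k * ka i); rewrite (hval_sum_al al_yc) intrM mulrA.
Qed.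

Lemma cvg_exp_adC_coweight i (k : int) :
  exists2 P : 'M[R]_n, P \in unitmx & exists s : 'rV[R]_n,
    (forall r, s 0 r ^+ 2 = 1) /\
    exp_series (adC br 0 (((k%:~R : R) *: yc i) *m Hb)) @ \oo -->
      invmx (block_mx P 0 0 P) *m diag_mx (row_mx s s) *m block_mx P 0 0 P.
Proof.
have [P P_unit [a P_weights]] := cartan_weight_basis br_lie cartan.
have rowP_neq0 r : row r P != 0.
  apply/eqP => Pr0; move: P_unit; rewrite -row_free_unit; apply/negP/row_freePn.
  by exists r; rewrite Pr0 sub0mx.
have /choice[m Pm] :=
  fun r => weight_coweight_pi_int i k (P_weights r) (rowP_neq0 r).
exists P => //; exists (\row_r (-1) ^+ `|m r|%N); split=> [r|].
  by rewrite mxE sqrr_sign.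
apply: cvg_eigenbasis; first by rewrite block_diag_mx_unit P_unit.
move=> q; rewrite block_mxEv !mxE; case: (split_ordP q) => r ->.
  rewrite rowKu row_row_mx row0 mxE.
  exact: (cvg_exp_adC_weight br_lie (Pm r)).1.
rewrite rowKd row_row_mx row0 mxE.
exact: (cvg_exp_adC_weight br_lie (Pm r)).2.
Qed.

Lemma exp_adC_coweight_order2 i (k : int) : odd `|k|%N ->
  let h := mexp (adC br 0 (((k%:~R : R) *: yc i) *m Hb)) in
  [/\ in_Gtilde br h, h *m h = 1%:M & h != 1%:M].
Proof.
move=> k_odd h; set Y := ((k%:~R : R) *: yc i) *m Hb.
have [P P_unit [s [s2 S_cvg]]] := cvg_exp_adC_coweight i k.
set Q := block_mx P 0 0 P in S_cvg; set D := diag_mx (row_mx s s) in S_cvg.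
have Q_unit : Q \in unitmx by rewrite block_diag_mx_unit P_unit.
have hE : h = invmx Q *m D *m Q := mexp_cvg S_cvg.
split.
- split; first by rewrite /h -[mexp _]mulmx1; apply/GCexp/GC1.
  move=> U; exists (U *m invmx P *m diag_mx s *m P).
  rewrite hE invmx_block_diag // /D /Q diag_mx_row !mulmxA !mul_row_block.
  by rewrite !(mulmx0, mul0mx, addr0, add0r).
- have DD : D *m D = 1%:M.
    rewrite mulmx_diag -diag_const_mx; congr diag_mx; apply/rowP => j.
    by rewrite !mxE; case: (fintype.split j) => r; rewrite -expr2 s2.
  by rewrite hE !mulmxA mulmxK // -(mulmxA (invmx Q)) DD mulmx1 mulVmx.
have [al_roots _ _] := roots; have [_ [v [v_neq0 v_root]]] := al_roots i.
have Yv : br Y v = ((k%:~R : R) * pi) *: v by rewrite v_root hvalZr al_yc eqxx.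
have hv : row_mx v 0 *m h = - row_mx v 0.
  have hv_cvg := cvg_mulmxl (B := row_mx v 0) S_cvg; rewrite -hE in hv_cvg.
  rewrite -(cvg_lim _ hv_cvg) // (cvg_lim _ (cvg_exp_adC_weight br_lie Yv).1) //.
  by rewrite -signr_odd k_odd expr1 scaleN1r.
apply/eqP => h1; move: hv; rewrite h1 mulmx1 => /eqP.
rewrite -addr_eq0 -mulr2n -scaler_nat scaler_eq0 pnatr_eq0 -row_mx0 /=.
by move=> /eqP/eq_row_mx[/eqP]; rewrite (negPf v_neq0).
Qed.

End ExpCoweight.

Theorem lemma2p2p1 (R : realType) (n l : nat)
    (br : 'rV[R]_n -> 'rV[R]_n -> 'rV[R]_n) (Hb : 'M[R]_(l, n))
    (al : 'I_l -> 'rV[R]_l) (yc : 'I_l -> 'rV[R]_l) :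
  semisimple br -> split_cartan br Hb -> simple_roots br Hb al ->
  (forall i j : 'I_l, hval (al j) (yc i) = if i == j then pi else 0) ->
  (forall cx cy : 'rV[R]_l,
     (forall i, exists r : R, cexp (alphaC (al i) cx cy) = (r%:C)%C) <->
     (exists k : 'I_l -> int, cy = \sum_(i < l) (k i)%:~R *: yc i))
  /\
  (forall (i : 'I_l) (k : int), odd `|k|%N ->
     let h := mexp (adC br 0 (((k%:~R : R) *: yc i) *m Hb)) in
     [/\ in_Gtilde br h, h *m h = 1%:M & h != 1%:M]).
Proof.
move=> [br_lie _] cartan roots al_yc; split.
  by have [_ free_al _] := roots; exact: cexp_alphaC_realP.
exact: (exp_adC_coweight_order2 br_lie cartan roots al_yc).
Qed.
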